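(* Let $\overline{G}$ be the roommate diversity game with red agents $r_1,r_2,r_3$, blue agents $b_1,\dots,b_6$, room size $3$ and the trichotomous preferences described in the context. Then $\overline{G}$ has no popular outcome; in particular, a popular outcome is not guaranteed to exist in a roommate diversity game.
   Context: A roommate diversity game consists of disjoint finite sets $R$ (red agents) and $B$ (blue agents), a room size $s$ with $s$ dividing $|R\cup B|$, and for each agent a weak order over the fractions $\{j/s: 0\le j\le s\}$. An outcome is a partition of $R\cup B$ into rooms of size $s$; $\pi(a)$ is the room containing $a$ and $\theta(C)=|C\cap R|/|C|$. Agent $a$ prefers $\pi$ to $\pi'$ if it strictly prefers $\theta(\pi(a))$ to $\theta(\pi'(a))$; $N(\pi,\pi')$ is the set of agents preferring $\pi$ to $\pi'$, $\phi(\pi,\pi')=|N(\pi,\pi')|-|N(\pi',\pi)|$, and $\pi$ is popular if $\phi(\pi,\pi')\ge 0$ for every outcome $\pi'$. A trichotomous preference is given by a partition of the fractions into sets $D_a^+$ (approved), $D_a^n$ (neutral), $D_a^-$ (disapproved), possibly empty, with approved $\succ$ neutral $\succ$ disapproved and indifference within each set. In $\overline{G}$ ($s=3$): $r_1$: $D^+=\{1/3\}$, $D^-=\{2/3,1\}$; $r_2,r_3$: $D^+=\{2/3\}$, $D^-=\{1/3,1\}$; $b_1,\dots,b_4$: $D^+=\{1/3\}$, $D^n=\{2/3\}$, $D^-=\{0\}$; $b_5,b_6$: $D^+=\{0\}$, $D^-=\{1/3,2/3\}$ (a red agent is never in a room of fraction $0$, a blue agent never in one of fraction $1$). *)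

From mathcomp Require Import all_boot all_order all_algebra.
Set Implicit Arguments. Unset Strict Implicit. Unset Printing Implicit Defensive.
Import Order.TTheory GRing.Theory Num.Theory.

Section Game.
Variable Agent : finType.

(* A roommate diversity game: red agents [red] (blue = complement), room size
   [s], and for every agent a weak order over fractions, represented by a
   utility (rank) function [pref a : rat -> nat] (higher = better). *)

Definition is_outcome (s : nat) (P : {set {set Agent}}) : Prop :=
  partition P [set: Agent] /\ forall C, C \in P -> #|C| = s.

Definition theta (red : {set Agent}) (C : {set Agent}) : rat :=
  (#|C :&: red|%:R / #|C|%:R)%R.

Definition prefers (red : {set Agent}) (pref : Agent -> rat -> nat)
  (P P' : {set {set Agent}}) (a : Agent) : bool :=
  pref a (theta red (pblock P' a)) < pref a (theta red (pblock P a)).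

Definition Nset red pref (P P' : {set {set Agent}}) : {set Agent} :=
  [set a | prefers red pref P P' a].

Definition phi red pref (P P' : {set {set Agent}}) : int :=
  (#|Nset red pref P P'|%:Z - #|Nset red pref P' P|%:Z)%R.

Definition popular red s pref (P : {set {set Agent}}) : Prop :=
  is_outcome s P /\
  forall P', is_outcome s P' -> (0 <= phi red pref P P')%R.
End Game.

Definition trich (Dplus Dminus : seq rat) (x : rat) : nat :=
  if x \in Dplus then 2 else if x \in Dminus then 0 else 1.

(* The game G-bar: agents 'I_9; indices 0,1,2 are r1,r2,r3; 3..8 are b1..b6. *)
Definition Gbar_red : {set 'I_9} := [set i : 'I_9 | (i < 3)%N].

Definition third : rat := (1 / 3)%R.
Definition twothirds : rat := (2 / 3)%R.

Definition Gbar_pref (a : 'I_9) : rat -> nat :=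
  match nat_of_ord a with
  | 0 => trich [:: third] [:: twothirds; 1%R]
  | 1 | 2 => trich [:: twothirds] [:: third; 1%R]
  | 3 | 4 | 5 | 6 => trich [:: third] [:: 0%R]
  | _ => trich [:: 0%R] [:: third; twothirds]
  end.

(* In an outcome every room has three agents, so an agent's satisfaction only
   depends on the number of red agents in its room: two outcomes are compared
   through their red-count profiles alone.  The profile of an outcome satisfies
   counting constraints (for each j, the agents lying in rooms with j red agents
   come in triples, and j in 3 of them are red), and only finitely many profiles
   satisfy them.  Each of these is outvoted by one of eight outcomes in which r1
   is with two of b1..b4, r2 and r3 are with a third one, and the last one is
   with b5 and b6; this final step is a computation. *)

From mathcomp Require Import all_boot all_order all_algebra.
Set Implicit Arguments. Unset Strict Implicit. Unset Printing Implicit Defensive.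
Import Num.Theory.

Lemma card_set_count (T : finType) (p : pred T) : #|[set x | p x]| = count p (enum T).
Proof. by rewrite cardsE cardE size_filter enumT. Qed.

Lemma card_set_in_count (T : finType) (A : {set T}) (p : pred T) :
  #|[set x in A | p x]| = count p (enum A).
Proof.
rewrite card_set_count enumT /enum_mem count_filter.
by apply: eq_count => x; rewrite /= andbC.
Qed.

Lemma enum_ord_inZp n : enum 'I_n.+1 = map inZp (iota 0 n.+1).
Proof.
apply: (inj_map val_inj); rewrite val_enum_ord -map_comp -[LHS]map_id.
by apply/eq_in_map => i; rewrite mem_iota /= => lt_in; rewrite modn_small.
Qed.

Fixpoint nat_tuples (n k : nat) : seq (seq nat) :=
  if n is n'.+1 then [seq x :: t | x <- iota 0 k, t <- nat_tuples n' k] else [:: [::]].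

Lemma mem_nat_tuples k l : all (fun x => x < k) l -> l \in nat_tuples (size l) k.
Proof.
elim: l => [|x l IHl] //= /andP[xk lk].
by apply: (allpairs_f (fun y t => y :: t)); rewrite ?mem_iota ?IHl.
Qed.

Section RedCount.
Variables (Agent : finType) (red : {set Agent}) (s : nat).
Implicit Types (P : {set {set Agent}}) (a : Agent) (v w : Agent -> nat).

Definition redcount P a : nat := #|pblock P a :&: red|.

Definition consistent_profile v : bool :=
  all (fun j => let n := count (fun a => v a == j) (enum Agent) in
                (s %| n) && (s * count (fun a => v a == j) (enum red) == j * n))
      (iota 0 s.+1).

Lemma eq_consistent_profile v w : v =1 w -> consistent_profile v = consistent_profile w.
Proof.
move=> e; apply: eq_all => j.
have ej (r : seq Agent) : count (fun a => v a == j) r = count (fun a => w a == j) r.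
  by apply: eq_count => a; rewrite e.
by rewrite /= !ej.
Qed.

Definition supporters (pref : Agent -> rat -> nat) v w : nat :=
  count (fun a => pref a ((w a)%:R / s%:R)%R < pref a ((v a)%:R / s%:R)%R) (enum Agent).

Lemma eq_supporters pref v v' w w' :
  v =1 v' -> w =1 w' -> supporters pref v w = supporters pref v' w'.
Proof. by move=> ev ew; apply: eq_count => a; rewrite ev ew. Qed.

Section Outcome.
Variable P : {set {set Agent}}.
Hypothesis outP : is_outcome s P.

Lemma pblock_outcome a : pblock P a \in P.
Proof. by apply: pblock_mem; rewrite (cover_partition outP.1) inE. Qed.

Lemma card_pblock_outcome a : #|pblock P a| = s.
Proof. exact: outP.2 (pblock_outcome a). Qed.

Lemma redcount_le a : redcount P a <= s.
Proof. by rewrite -(card_pblock_outcome a) subset_leq_card ?subsetIl. Qed.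

Lemma theta_pblock_outcome a : theta red (pblock P a) = ((redcount P a)%:R / s%:R)%R.
Proof. by rewrite /theta card_pblock_outcome. Qed.

Lemma card_redcount_eq (K : {set Agent}) j :
  #|[set a in K | redcount P a == j]| = \sum_(A in P | #|A :&: red| == j) #|A :&: K|.
Proof.
have [/eqP coverP trivP _] := and3P outP.1.
rewrite -sum1_card.
rewrite (eq_bigl (fun a => (a \in cover P) && ((redcount P a == j) && (a \in K)))); last first.
  by move=> a; rewrite coverP !inE andbC.
rewrite big_trivIset_cond // big_mkcondr /=; apply: eq_bigr => A PA.
case: eqP => [<-|neqj]; last first.
  rewrite big_pred0 // => a; apply/negbTE; apply/andP => -[Aa /andP[/eqP eqj _]].
  by apply: neqj; rewrite -eqj /redcount (def_pblock trivP PA Aa).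
rewrite -[RHS]sum1_card; apply: eq_bigl => a; rewrite !inE.
by case Aa: (a \in A); rewrite //= /redcount (def_pblock trivP PA Aa) eqxx.
Qed.

Lemma dvdn_card_redcount j : s %| #|[set a | redcount P a == j]|.
Proof.
rewrite -[[set a | _]]setTI -setIdE card_redcount_eq.
by apply: dvdn_sum => A /andP[PA _]; rewrite setIT outP.2.
Qed.

Lemma card_red_redcount j :
  s * #|[set a in red | redcount P a == j]| = j * #|[set a | redcount P a == j]|.
Proof.
rewrite -[[set a | redcount P a == j]]setTI -setIdE !card_redcount_eq !big_distrr.
by apply: eq_bigr => A /andP[PA /eqP <-] /=; rewrite setIT (outP.2 A PA) mulnC.
Qed.

Lemma redcount_consistent : consistent_profile (redcount P).
Proof.
apply/allP => j _; rewrite /= -card_set_count -card_set_in_count.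
by rewrite dvdn_card_redcount card_red_redcount eqxx.
Qed.
End Outcome.

Lemma card_Nset_outcome pref P P' : is_outcome s P -> is_outcome s P' ->
  #|Nset red pref P P'| = supporters pref (redcount P) (redcount P').
Proof.
move=> outP outP'; rewrite card_set_count; apply: eq_count => a.
by rewrite /prefers !theta_pblock_outcome.
Qed.

Section Labelling.
Variables (T : eqType) (f : Agent -> T).

Definition fiber_redcount a : nat := count (fun b => f b == f a) (enum red).

Definition uniform_labelling : bool :=
  all (fun a => count (fun b => f b == f a) (enum Agent) == s) (enum Agent).

Lemma pblock_preim_partition a :
  pblock (preim_partition f [set: Agent]) a = [set b | f b == f a].
Proof.
have eqf : {in [set: Agent] & &, equivalence_rel (fun x y => f x == f y)}.
  by split=> // /eqP->.
by apply/setP => b; rewrite inE (pblock_equivalence_partition eqf) ?inE // eq_sym.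
Qed.

Lemma redcount_preim_partition :
  redcount (preim_partition f [set: Agent]) =1 fiber_redcount.
Proof.
by move=> a; rewrite /redcount pblock_preim_partition setIC -setIdE card_set_in_count.
Qed.

Lemma preim_partition_outcome :
  uniform_labelling -> is_outcome s (preim_partition f [set: Agent]).
Proof.
move=> /allP uniform_f; split=> [|C /imsetP[a _ ->]]; first exact: preim_partitionP.
rewrite -(eqP (uniform_f a (mem_enum _ a))) -card_set_count.
by apply: eq_card => b; rewrite !inE eq_sym.
Qed.
End Labelling.
End RedCount.

Lemma enum_Gbar_red : enum Gbar_red = map inZp (iota 0 3).
Proof.
rewrite -[enum _]/(filter (mem Gbar_red) (Finite.enum 'I_9)) -enumT enum_ord_inZp.
rewrite filter_map (@eq_in_filter _ _ (fun i => i < 3)) // => i.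
by rewrite mem_iota => /andP[_ lt_i9]; rewrite /= inE /= modn_small.
Qed.

Definition rival_labels : seq (seq nat) :=
  [:: [:: 0; 1; 1; 0; 0; 1; 2; 2; 2]; [:: 0; 1; 1; 0; 0; 2; 1; 2; 2];
      [:: 0; 1; 1; 0; 1; 0; 2; 2; 2]; [:: 0; 1; 1; 1; 0; 0; 2; 2; 2];
      [:: 0; 1; 1; 0; 1; 2; 0; 2; 2]; [:: 0; 1; 1; 0; 2; 0; 1; 2; 2];
      [:: 0; 1; 1; 0; 2; 1; 0; 2; 2]; [:: 0; 1; 1; 1; 0; 2; 0; 2; 2]].

Definition Gbar_beats (v : 'I_9 -> nat) (l : seq nat) : bool :=
  let f (a : 'I_9) := nth 0 l a in
  let w := fiber_redcount Gbar_red f in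
  uniform_labelling 3 f && (supporters 3 Gbar_pref v w < supporters 3 Gbar_pref w v).

Lemma Gbar_consistent_profiles_beaten :
  all (fun l => has (Gbar_beats (fun a => nth 0 l a)) rival_labels)
      [seq l <- nat_tuples 9 4 | consistent_profile Gbar_red 3 (fun a : 'I_9 => nth 0 l a)].
Proof.
(* Neither [enum] nor finset membership reduces, and the VM would evaluate the
   finType instance hidden in [Finite.sort _]: replace them by explicit terms. *)
rewrite /Gbar_beats /uniform_labelling /fiber_redcount /supporters /consistent_profile.
rewrite enum_Gbar_red enum_ord_inZp -[Finite.sort _]/'I_9.
by vm_compute.
Qed.

Lemma Gbar_outcome_beaten P : is_outcome 3 P ->
  exists2 Q, is_outcome 3 Q &
    supporters 3 Gbar_pref (redcount Gbar_red P) (redcount Gbar_red Q) <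
    supporters 3 Gbar_pref (redcount Gbar_red Q) (redcount Gbar_red P).
Proof.
move=> outP; set v := redcount Gbar_red P.
pose l := [seq v a | a <- enum 'I_9].
have vE : v =1 (fun a : 'I_9 => nth 0 l a).
  by move=> a; rewrite (nth_map a) ?size_enum_ord // nth_ord_enum.
have l_tuple : l \in nat_tuples 9 4.
  have := @mem_nat_tuples 4 l; rewrite size_map size_enum_ord; apply.
  by apply/allP => _ /mapP[a _ ->]; rewrite ltnS (redcount_le _ outP).
have l_consistent : consistent_profile Gbar_red 3 (fun a : 'I_9 => nth 0 l a).
  by rewrite -(eq_consistent_profile _ _ vE) redcount_consistent.
have /hasP[fl _ /andP[uniform_fl beats]] :
    has (Gbar_beats (fun a => nth 0 l a)) rival_labels.
  by apply: (allP Gbar_consistent_profiles_beaten); rewrite mem_filter l_consistent.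
exists (preim_partition (fun a : 'I_9 => nth 0 fl a) [set: 'I_9]).
  exact: preim_partition_outcome.
rewrite (eq_supporters _ _ vE (redcount_preim_partition _ _)).
by rewrite (eq_supporters _ _ (redcount_preim_partition _ _) vE).
Qed.

Theorem mainTheorem10 :
  ~ exists P : {set {set 'I_9}}, popular Gbar_red 3 Gbar_pref P.
Proof.
move=> [P [outP P_popular]].
have [Q outQ beaten] := Gbar_outcome_beaten outP.
have := P_popular Q outQ.
rewrite /phi subr_ge0 lez_nat (card_Nset_outcome _ _ outP outQ).
by rewrite (card_Nset_outcome _ _ outQ outP) leqNgt beaten.
Qed.
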